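(* Let $\mathbf x:I\subset\mathbb R_*\to\mathbb R_*^3$ be a multiplicative naturally parametrized curve with multiplicative curvature $\kappa>0_*$ and torsion $\tau$ on $I$. Then $\mathbf x$ is a multiplicative slant helix if and only if the function $$\sigma(s)=\Big[\kappa^{2_*}(s)/_*\big(\kappa^{2_*}(s)+_*\tau^{2_*}(s)\big)^{\frac32_*}\Big]\cdot_*\big(\tau(s)/_*\kappa(s)\big)^*$$ is constant on $I$. (Explicitly, $\log\sigma=\dfrac{(\log\kappa)^2}{((\log\kappa)^2+(\log\tau)^2)^{3/2}}\log\big((\tau/_*\kappa)^*\big)$.)
   Context: Multiplicative arithmetic: $\mathbb R_*=(0,\infty)$ with $a+_*b=ab$, $a-_*b=a/b$, $a\cdot_*b=e^{\log a\log b}$, $a/_*b=e^{\log a/\log b}$ ($b\neq1$); $0_*=1$, $1_*=e$, $-_*a=1/a$; $a>0_*$ means $a>1$; powers $a^{r_*}=e^{(\log a)^r}$. On $\mathbb R_*^3$, with $\log\mathbf u=(\log u_i)_i$: $\mathbf u+_*\mathbf v=(u_iv_i)_i$, $k\cdot_*\mathbf u=(e^{\log k\log u_i})_i$, $\langle\mathbf u,\mathbf v\rangle_*=e^{\langle\log\mathbf u,\log\mathbf v\rangle}$, $\|\mathbf u\|_*=e^{\|\log\mathbf u\|}$, $\mathbf u\times_*\mathbf v=\exp(\log\mathbf u\times\log\mathbf v)$. Multiplicative derivative: $g^*(s)=e^{s g'(s)/g(s)}$, componentwise, iterated. $\mathbf x$ is naturally parametrized if $\|\mathbf x^*\|_*=1_*$.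 Multiplicative Frenet apparatus: $\mathbf t=\mathbf x^*$, $\kappa=\|\mathbf x^{**}\|_*$, $\mathbf n=\mathbf x^{**}/_*\kappa$, $\mathbf b=\mathbf t\times_*\mathbf n$, $\tau=\langle\mathbf n^*,\mathbf b\rangle_*$; Frenet formulas $\mathbf t^*=\kappa\cdot_*\mathbf n$, $\mathbf n^*=-_*\kappa\cdot_*\mathbf t+_*\tau\cdot_*\mathbf b$, $\mathbf b^*=-_*\tau\cdot_*\mathbf n$. A curve $\mathbf x$ with $\kappa\ne0_*$ is a multiplicative slant helix if there is a constant multiplicative unit vector $\mathbf v$ ($\|\mathbf v\|_*=1_*$) such that the multiplicative angle between $\mathbf n(s)$ and $\mathbf v$ is constant, i.e. $\langle\mathbf n(s),\mathbf v\rangle_*$ is constant on $I$. *)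

From Stdlib Require Import Reals Lra.
From Coquelicot Require Import Coquelicot.
Open Scope R_scope.

Definition madd (a b : R) : R := a * b.
Definition mmul (a b : R) : R := exp (ln a * ln b).
Definition mdivs (a b : R) : R := exp (ln a / ln b).       (* a /_* b, b <> 1 *)
Definition msq (a : R) : R := exp ((ln a) ^ 2).
(* a^{r_*} = e^{(log a)^r}, used here only with log a > 0 *)
Definition mpowR (a r : R) : R := exp (Rpower (ln a) r).

Definition mder (g : R -> R) (s : R) : R := exp (s * Derive g s / g s).

Definition vec3 : Type := (R * R * R)%type.
Definition c1 (u : vec3) : R := fst (fst u).
Definition c2 (u : vec3) : R := snd (fst u).
Definition c3 (u : vec3) : R := snd u.
Definition mk3 (a b c : R) : vec3 := (a, b, c).

Definition vpos (u : vec3) : Prop := 0 < c1 u /\ 0 < c2 u /\ 0 < c3 u.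

Definition minner (u v : vec3) : R :=
  exp (ln (c1 u) * ln (c1 v) + ln (c2 u) * ln (c2 v) + ln (c3 u) * ln (c3 v)).
Definition mnorm (u : vec3) : R :=
  exp (sqrt (ln (c1 u) ^ 2 + ln (c2 u) ^ 2 + ln (c3 u) ^ 2)).
Definition mvdiv (u : vec3) (k : R) : vec3 :=
  mk3 (mdivs (c1 u) k) (mdivs (c2 u) k) (mdivs (c3 u) k).
Definition mcross (u v : vec3) : vec3 :=
  let a1 := ln (c1 u) in let a2 := ln (c2 u) in let a3 := ln (c3 u) in
  let b1 := ln (c1 v) in let b2 := ln (c2 v) in let b3 := ln (c3 v) in
  mk3 (exp (a2 * b3 - a3 * b2)) (exp (a3 * b1 - a1 * b3)) (exp (a1 * b2 - a2 * b1)).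

Definition vmder (x : R -> vec3) (s : R) : vec3 :=
  mk3 (mder (fun u => c1 (x u)) s) (mder (fun u => c2 (x u)) s)
      (mder (fun u => c3 (x u)) s).

Definition mtan (x : R -> vec3) : R -> vec3 := vmder x.
Definition mcurv (x : R -> vec3) (s : R) : R := mnorm (vmder (vmder x) s).
Definition mnormal (x : R -> vec3) (s : R) : vec3 :=
  mvdiv (vmder (vmder x) s) (mcurv x s).
Definition mbinormal (x : R -> vec3) (s : R) : vec3 :=
  mcross (mtan x s) (mnormal x s).
Definition mtors (x : R -> vec3) (s : R) : R :=
  minner (vmder (mnormal x) s) (mbinormal x s).

Definition open_interval_pos (I : R -> Prop) : Prop :=
  (forall s, I s -> 0 < s) /\
  (forall a b c, I a -> I c -> a <= b <= c -> I b) /\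
  (forall s, I s -> exists e, 0 < e /\ forall u, Rabs (u - s) < e -> I u) /\
  (exists s, I s).

Definition smooth_curve_on (I : R -> Prop) (x : R -> vec3) : Prop :=
  forall s, I s -> vpos (x s) /\
    forall k, ex_derive_n (fun u => c1 (x u)) k s /\
              ex_derive_n (fun u => c2 (x u)) k s /\
              ex_derive_n (fun u => c3 (x u)) k s.

(* naturally parametrized: ||x^*||_* = 1_* = e *)
Definition mnatural (I : R -> Prop) (x : R -> vec3) : Prop :=
  forall s, I s -> mnorm (vmder x s) = exp 1.

Definition mslant_helix (I : R -> Prop) (x : R -> vec3) : Prop :=
  exists v : vec3, vpos v /\ mnorm v = exp 1 /\
    exists c : R, forall s, I s -> minner (mnormal x s) v = c.

Definition msigma (x : R -> vec3) (s : R) : R :=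
  let k := mcurv x s in let t := mtors x s in
  mmul (mdivs (msq k) (mpowR (madd (msq k) (msq t)) (3/2)))
       (mder (fun u => mdivs (mtors x u) (mcurv x u)) s).

(* Taking logarithms coordinatewise identifies R_* with R: the multiplicative
   vector operations become the Euclidean ones on [log x], and the
   multiplicative derivative becomes the Euler operator [euler f s = s f'(s)].
   So the logarithms [T, N, B, K, tau] of the multiplicative Frenet apparatus
   obey the classical Frenet equations with [euler] in place of d/ds, and
   [log sigma = (K euler tau - tau euler K) / (K^2 + tau^2)^(3/2)].

   If a unit vector [v] makes a constant angle with [N], its frame coordinates
   [a = <T,v>], [c = <N,v>], [b = <B,v>] satisfy [euler a = K c],
   [euler b = - tau c], and [K a = tau b] because [euler c = 0]. Hence
   [(a, b) = Q (tau, K) / sqrt (K^2 + tau^2)] with [Q = +- sqrt (1 - c^2)] a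
   nonzero constant, and differentiating [K a = tau b] gives [log sigma = c / Q].
   Conversely, if [log sigma = g] is constant, these formulas with
   [c = g / sqrt (1 + g^2)] define [a] and [b], and [a T + c N + b B] has
   vanishing Euler derivative: it is a constant unit vector at a constant
   angle with [N]. *)

From Stdlib Require Import Reals Lra Lia.
From Coquelicot Require Import Coquelicot.
Open Scope R_scope.

(** * Smooth functions and the Euler operator *)

Definition derivable_upto (I : R -> Prop) (n : nat) (f : R -> R) : Prop :=
  forall k s, (k <= n)%nat -> I s -> ex_derive (Derive_n f k) s.

Definition smooth_on (I : R -> Prop) (f : R -> R) : Prop :=
  forall n, derivable_upto I n f.

Lemma Derive_n_Derive (f : R -> R) n s : Derive_n (Derive f) n s = Derive_n f (S n) s.
Proof. change (Derive f) with (Derive_n f 1). rewrite Derive_n_comp. f_equal; lia. Qed.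

(* [auto_derive] eta-expands function arguments, and [ring] would then treat
   [Derive (fun y => f y) s] and [Derive f s] as distinct atoms. *)
Ltac eta_reduce :=
  repeat match goal with |- context [fun y => ?f y] => change (fun y => f y) with f end.

Section Smoothness.

Variable I : R -> Prop.
Hypothesis I_open : open I.

Lemma derivable_upto_ex n f s : derivable_upto I n f -> I s -> ex_derive f s.
Proof. intros Hf Hs. exact (Hf 0%nat s (Nat.le_0_l n) Hs). Qed.

Lemma derivable_upto_le n f : derivable_upto I (S n) f -> derivable_upto I n f.
Proof. intros Hf k s Hk Hs. apply Hf; [lia | exact Hs]. Qed.

Lemma derivable_upto_Derive n f : derivable_upto I (S n) f -> derivable_upto I n (Derive f).
Proof.
  intros Hf k s Hk Hs. apply (ex_derive_ext (Derive_n f (S k))).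
  - intro t. symmetry. apply Derive_n_Derive.
  - apply Hf; [lia | exact Hs].
Qed.

Lemma derivable_upto_ext n f g :
  (forall s, I s -> f s = g s) -> derivable_upto I n g -> derivable_upto I n f.
Proof.
  intros Hfg Hg k s Hk Hs. apply (ex_derive_ext_loc (Derive_n g k)).
  - apply (locally_open I); [exact I_open | | exact Hs].
    intros t Ht. symmetry. apply Derive_n_ext_loc.
    apply (locally_open I); [exact I_open | exact Hfg | exact Ht].
  - apply Hg; assumption.
Qed.

Lemma derivable_upto_step n f f' :
  (forall s, I s -> is_derive f s (f' s)) -> derivable_upto I n f' ->
  derivable_upto I (S n) f.
Proof.
  intros Hd Hf' [|k] s Hk Hs.
  - eexists. exact (Hd s Hs).
  - apply (ex_derive_ext (Derive_n (Derive f) k)); [intro t; apply Derive_n_Derive |].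
    apply (derivable_upto_ext n (Derive f) f'); [| exact Hf' | lia | exact Hs].
    intros t Ht. exact (is_derive_unique _ _ _ (Hd t Ht)).
Qed.

Lemma derivable_upto_const n c : derivable_upto I n (fun _ => c).
Proof.
  revert c; induction n; intro c.
  - intros [|k] s Hk Hs; [apply ex_derive_const | lia].
  - apply (derivable_upto_step n _ (fun _ => 0)); [intros; auto_derive; auto | apply IHn].
Qed.

Lemma derivable_upto_id n : derivable_upto I n (fun t => t).
Proof.
  destruct n as [|n].
  - intros [|k] s Hk Hs; [apply ex_derive_id | lia].
  - apply (derivable_upto_step n _ (fun _ => 1)); [intros; auto_derive; auto |].
    apply derivable_upto_const.
Qed.

Lemma derivable_upto_plus n f g : derivable_upto I n f -> derivable_upto I n g ->
  derivable_upto I n (fun t => f t + g t).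
Proof.
  revert f g; induction n as [|n IH]; intros f g Hf Hg.
  - intros [|k] s Hk Hs; [| lia].
    apply (ex_derive_plus f g); eapply derivable_upto_ex; eauto.
  - apply (derivable_upto_step n _ (fun t => Derive f t + Derive g t)).
    + intros s Hs. auto_derive; [repeat split; eapply derivable_upto_ex; eauto | eta_reduce; ring].
    + apply IH; apply derivable_upto_Derive; assumption.
Qed.

Lemma derivable_upto_mult n f g : derivable_upto I n f -> derivable_upto I n g ->
  derivable_upto I n (fun t => f t * g t).
Proof.
  revert f g; induction n as [|n IH]; intros f g Hf Hg.
  - intros [|k] s Hk Hs; [| lia].
    apply (ex_derive_mult f g); eapply derivable_upto_ex; eauto.
  - apply (derivable_upto_step n _ (fun t => Derive f t * g t + f t * Derive g t)).
    + intros s Hs. auto_derive; [repeat split; eapply derivable_upto_ex; eauto | eta_reduce; ring].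
    + apply derivable_upto_plus; apply IH; auto using derivable_upto_Derive, derivable_upto_le.
Qed.

Lemma derivable_upto_inv n f : (forall s, I s -> f s <> 0) -> derivable_upto I n f ->
  derivable_upto I n (fun t => / f t).
Proof.
  intros Hnz; revert f Hnz; induction n as [|n IH]; intros f Hnz Hf.
  - intros [|k] s Hk Hs; [| lia].
    apply ex_derive_inv; [eapply derivable_upto_ex; eauto | auto].
  - apply (derivable_upto_step n _ (fun t => (-1 * Derive f t) * (/ f t * / f t))).
    + intros s Hs. auto_derive; [repeat split; try eapply derivable_upto_ex; eauto |].
      eta_reduce; field. auto.
    + apply derivable_upto_mult; [apply derivable_upto_mult |].
      * apply derivable_upto_const.
      * apply derivable_upto_Derive; exact Hf.
      * apply derivable_upto_mult; apply IH; auto using derivable_upto_le.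
Qed.

Lemma derivable_upto_sqrt n f : (forall s, I s -> 0 < f s) -> derivable_upto I n f ->
  derivable_upto I n (fun t => sqrt (f t)).
Proof.
  intros Hpos; revert f Hpos; induction n as [|n IH]; intros f Hpos Hf.
  - intros [|k] s Hk Hs; [| lia].
    destruct (derivable_upto_ex _ _ _ Hf Hs) as [df Hdf].
    eexists. apply is_derive_sqrt; [exact Hdf | auto].
  - apply (derivable_upto_step n _ (fun t => Derive f t * (/ 2 * / sqrt (f t)))).
    + intros s Hs. auto_derive; [repeat split; try eapply derivable_upto_ex; eauto |].
      eta_reduce; field. apply Rgt_not_eq, sqrt_lt_R0; auto.
    + apply derivable_upto_mult; [apply derivable_upto_Derive; exact Hf |].
      apply derivable_upto_mult; [apply derivable_upto_const |].
      apply derivable_upto_inv; [intros s Hs; apply Rgt_not_eq, sqrt_lt_R0; auto |].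
      apply IH; auto using derivable_upto_le.
Qed.

Lemma smooth_on_ex f s : smooth_on I f -> I s -> ex_derive f s.
Proof. intros Hf. exact (derivable_upto_ex 0 f s (Hf 0%nat)). Qed.

Lemma smooth_on_Derive f : smooth_on I f -> smooth_on I (Derive f).
Proof. intros Hf n. apply derivable_upto_Derive, Hf. Qed.

Lemma smooth_on_ext f g : (forall s, I s -> f s = g s) -> smooth_on I g -> smooth_on I f.
Proof. intros Hfg Hg n. exact (derivable_upto_ext n f g Hfg (Hg n)). Qed.

Lemma smooth_on_const c : smooth_on I (fun _ => c).
Proof. intro n. apply derivable_upto_const. Qed.

Lemma smooth_on_id : smooth_on I (fun t => t).
Proof. intro n. apply derivable_upto_id. Qed.

Lemma smooth_on_plus f g : smooth_on I f -> smooth_on I g -> smooth_on I (fun t => f t + g t).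
Proof. intros Hf Hg n. apply derivable_upto_plus; auto. Qed.

Lemma smooth_on_mult f g : smooth_on I f -> smooth_on I g -> smooth_on I (fun t => f t * g t).
Proof. intros Hf Hg n. apply derivable_upto_mult; auto. Qed.

Lemma smooth_on_minus f g : smooth_on I f -> smooth_on I g -> smooth_on I (fun t => f t - g t).
Proof.
  intros Hf Hg. apply (smooth_on_ext _ (fun t => f t + (-1) * g t)); [intros; ring |].
  apply smooth_on_plus, smooth_on_mult; auto using smooth_on_const.
Qed.

Lemma smooth_on_inv f : (forall s, I s -> f s <> 0) -> smooth_on I f ->
  smooth_on I (fun t => / f t).
Proof. intros Hnz Hf n. apply derivable_upto_inv; auto. Qed.

Lemma smooth_on_sqrt f : (forall s, I s -> 0 < f s) -> smooth_on I f ->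
  smooth_on I (fun t => sqrt (f t)).
Proof. intros Hpos Hf n. apply derivable_upto_sqrt; auto. Qed.

End Smoothness.

Lemma ex_derive_Rplus (f g : R -> R) s :
  ex_derive f s -> ex_derive g s -> ex_derive (fun u => f u + g u) s.
Proof. apply (ex_derive_plus f g). Qed.

Lemma ex_derive_Rminus (f g : R -> R) s :
  ex_derive f s -> ex_derive g s -> ex_derive (fun u => f u - g u) s.
Proof. apply (ex_derive_minus f g). Qed.

(* Syntax-directed, since unifying [Rplus] against [Rmult] unfolds the
   definitions of the real operations and does not terminate in practice. *)
Ltac solve_ex_derive :=
  repeat match goal with
  | |- _ => assumption
  | |- ex_derive (fun t => _ + _) _ => apply ex_derive_Rplus
  | |- ex_derive (fun t => _ - _) _ => apply ex_derive_Rminus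
  | |- ex_derive (fun t => _ * _) _ => apply ex_derive_mult
  | |- ex_derive (fun _ => ?c) _ => apply (ex_derive_const c)
  end.

Ltac solve_smooth :=
  repeat match goal with
  | |- _ => assumption
  | |- smooth_on _ (fun t => _ + _) => apply smooth_on_plus
  | |- smooth_on _ (fun t => _ - _) => apply smooth_on_minus
  | |- smooth_on _ (fun t => _ * _) => apply smooth_on_mult
  | |- smooth_on _ (fun _ => ?c) => apply (smooth_on_const _ _ c)
  end.

Definition euler (f : R -> R) (s : R) : R := s * Derive f s.

Lemma smooth_on_euler I f : open I -> smooth_on I f -> smooth_on I (euler f).
Proof. intros HI Hf. apply smooth_on_mult, smooth_on_Derive; auto using smooth_on_id. Qed.

Lemma euler_const_on I f c s : open I -> (forall u, I u -> f u = c) -> I s -> euler f s = 0.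
Proof.
  intros HI Hc Hs. unfold euler. rewrite (Derive_ext_loc f (fun _ => c)), Derive_const; [ring |].
  apply (locally_open I); auto.
Qed.

Lemma Derive_0_eq_on I f a b : (forall x y z, I x -> I z -> x <= y <= z -> I y) ->
  (forall s, I s -> is_derive f s 0) -> I a -> I b -> f a = f b.
Proof.
  intros Hconv Hd Ha Hb.
  assert (Hin : forall y, Rmin a b <= y <= Rmax a b -> I y).
  { intros y Hy. unfold Rmin, Rmax in Hy. destruct (Rle_dec a b).
    - apply (Hconv a y b); auto.
    - apply (Hconv b y a); auto. }
  destruct (MVT_gen f a b (fun _ => 0)) as [c [_ Hc]].
  - intros y Hy. apply Hd, Hin. lra.
  - intros y Hy. apply continuity_pt_filterlim, (ex_derive_continuous (V := R_NormedModule)).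
    eexists. apply Hd, Hin, Hy.
  - lra.
Qed.

Lemma euler_is_derive f s l : is_derive f s l -> euler f s = s * l.
Proof. intros Hd. unfold euler. rewrite (is_derive_unique _ _ _ Hd). reflexivity. Qed.

Lemma open_interval_pos_open I : open_interval_pos I -> open I.
Proof.
  intros [_ [_ [Hloc _]]] s Hs. destruct (Hloc s Hs) as [e [He Hball]].
  exists (mkposreal e He). intros u Hu. apply Hball, Hu.
Qed.

(** * The slant-helix equations *)

Lemma Rpower_3_2 W : 0 < W -> Rpower W (3 / 2) = W * sqrt W.
Proof.
  intros HW. replace (3 / 2) with (1 + / 2) by field.
  rewrite Rpower_plus, Rpower_1, Rpower_sqrt; auto.
Qed.

Lemma hypot2_pos k t : 0 < k -> 0 < k ^ 2 + t ^ 2.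
Proof. intros Hk. pose proof (pow2_ge_0 t). nra. Qed.

Lemma is_derive_div_hypot (f K tau : R -> R) s :
  ex_derive f s -> ex_derive K s -> ex_derive tau s -> 0 < K s ^ 2 + tau s ^ 2 ->
  let W := K s ^ 2 + tau s ^ 2 in
  is_derive (fun u : R => f u / sqrt (K u ^ 2 + tau u ^ 2)) s
    ((Derive f s * W - f s * (K s * Derive K s + tau s * Derive tau s)) / (W * sqrt W)).
Proof.
  intros Hf HK Htau HW W. fold W in HW.
  assert (HsW : 0 < sqrt W) by (apply sqrt_lt_R0; exact HW).
  auto_derive; replace (K s * (K s * 1) + tau s * (tau s * 1)) with W by (unfold W; ring).
  - repeat split; auto. apply Rgt_not_eq, HsW.
  - eta_reduce. rewrite sqrt_sqrt by lra. field. split; apply Rgt_not_eq; assumption.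
Qed.

Definition sigma_log (K tau : R -> R) (s : R) : R :=
  K s ^ 2 / Rpower (K s ^ 2 + tau s ^ 2) (3 / 2) * euler (fun u => tau u / K u) s.

Lemma sigma_log_eq (K tau : R -> R) s : 0 < K s -> ex_derive K s -> ex_derive tau s ->
  let W := K s ^ 2 + tau s ^ 2 in
  sigma_log K tau s = (K s * euler tau s - tau s * euler K s) / (W * sqrt W).
Proof.
  intros HK dK dtau W.
  assert (HW : 0 < W) by apply hypot2_pos, HK.
  assert (HsW : 0 < sqrt W) by (apply sqrt_lt_R0; exact HW).
  unfold sigma_log, euler. fold W. rewrite Rpower_3_2 by exact HW.
  rewrite Derive_div by (auto; apply Rgt_not_eq, HK).
  field. repeat split; apply Rgt_not_eq; assumption.
Qed.

(* [a, c, b] are the coordinates [<T,v>, <N,v>, <B,v>] of the axis [v] of a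
   slant helix in the logarithmic Frenet frame. *)
Definition slant_ode (I : R -> Prop) (K tau a b : R -> R) (c : R) : Prop :=
  forall s, I s ->
    ex_derive a s /\ ex_derive b s /\
    euler a s = K s * c /\ euler b s = - tau s * c /\
    K s * a s = tau s * b s /\ a s ^ 2 + b s ^ 2 + c ^ 2 = 1.

Lemma sigma_log_const_slant_ode I (K tau : R -> R) g :
  (forall s, I s -> 0 < K s /\ ex_derive K s /\ ex_derive tau s) ->
  (forall s, I s -> sigma_log K tau s = g) ->
  exists a b c, slant_ode I K tau a b c.
Proof.
  intros HK Hg.
  set (r := / sqrt (1 + g ^ 2)).
  assert (Hr : r ^ 2 * (1 + g ^ 2) = 1).
  { assert (H1g : 0 < 1 + g ^ 2) by (pose proof (pow2_ge_0 g); lra).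
    assert (Hs1g : 0 < sqrt (1 + g ^ 2)) by (apply sqrt_lt_R0; exact H1g).
    unfold r. rewrite <- (sqrt_sqrt (1 + g ^ 2)) at 2 by lra.
    field. apply Rgt_not_eq, Hs1g. }
  exists (fun u => r * tau u / sqrt (K u ^ 2 + tau u ^ 2)),
         (fun u => r * K u / sqrt (K u ^ 2 + tau u ^ 2)), (g * r).
  intros s Hs. destruct (HK s Hs) as [Kpos [dK dtau]].
  pose proof (Hg s Hs) as Hgs. rewrite sigma_log_eq in Hgs by auto.
  set (W := K s ^ 2 + tau s ^ 2) in Hgs.
  assert (HW : 0 < W) by apply hypot2_pos, Kpos.
  assert (HsW : 0 < sqrt W) by (apply sqrt_lt_R0; exact HW).
  assert (dra : ex_derive (fun u => r * tau u) s) by (apply ex_derive_scal, dtau).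
  assert (drb : ex_derive (fun u => r * K u) s) by (apply ex_derive_scal, dK).
  pose proof (is_derive_div_hypot _ K tau s dra dK dtau HW) as Ha.
  pose proof (is_derive_div_hypot _ K tau s drb dK dtau HW) as Hb.
  cbv zeta in Ha, Hb. fold W in Ha, Hb. rewrite Derive_scal in Ha, Hb.
  repeat split.
  - eexists; exact Ha.
  - eexists; exact Hb.
  - rewrite (euler_is_derive _ _ _ Ha), <- Hgs. unfold euler, W.
    field. split; apply Rgt_not_eq; assumption.
  - rewrite (euler_is_derive _ _ _ Hb), <- Hgs. unfold euler, W.
    field. split; apply Rgt_not_eq; assumption.
  - field. apply Rgt_not_eq, HsW.
  - fold W. rewrite <- Hr.
    transitivity (r ^ 2 * W / (sqrt W * sqrt W) + (g * r) ^ 2).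
    + unfold W. field. apply Rgt_not_eq, HsW.
    + rewrite sqrt_sqrt by lra. field. apply Rgt_not_eq, HW.
Qed.

Section SlantOde.

Variables (I : R -> Prop) (K tau a b : R -> R) (c : R).
Hypothesis I_interval : open_interval_pos I.
Hypothesis K_reg : forall s, I s -> 0 < K s /\ ex_derive K s /\ ex_derive tau s.
Hypothesis ode : slant_ode I K tau a b c.

Lemma slant_ode_c_sqr_lt_1 : c ^ 2 < 1.
Proof.
  destruct I_interval as [_ [_ [_ [s1 Hs1]]]].
  destruct (Rlt_or_le (c ^ 2) 1) as [Hc | Hc]; [exact Hc | exfalso].
  assert (a_0 : forall u, I u -> a u = 0).
  { intros u Hu. destruct (ode u Hu) as [_ [_ [_ [_ [_ Hn]]]]].
    pose proof (pow2_ge_0 (a u)); pose proof (pow2_ge_0 (b u)). nra. }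
  destruct (ode s1 Hs1) as [_ [_ [ea _]]]. destruct (K_reg s1 Hs1) as [Kpos _].
  rewrite (euler_const_on I a 0 s1 (open_interval_pos_open I I_interval) a_0 Hs1) in ea.
  assert (c = 0) by nra. subst c. lra.
Qed.

Lemma slant_ode_hypot_ratio_derive s : I s ->
  is_derive (fun u => (a u * tau u + b u * K u) / sqrt (K u ^ 2 + tau u ^ 2)) s 0.
Proof.
  intros Hs. destruct I_interval as [Hpos _].
  destruct (K_reg s Hs) as [Kpos [dK dtau]].
  destruct (ode s Hs) as [da [db [ea [eb [Hab _]]]]].
  assert (HW : 0 < K s ^ 2 + tau s ^ 2) by apply hypot2_pos, Kpos.
  assert (dnum : ex_derive (fun u => a u * tau u + b u * K u) s) by solve_ex_derive.
  pose proof (is_derive_div_hypot _ K tau s dnum dK dtau HW) as Hd. cbv zeta in Hd.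
  assert (Hab' : Derive a s * tau s + Derive b s * K s = 0).
  { apply (Rmult_eq_reg_l s); [| apply Rgt_not_eq, Hpos, Hs].
    unfold euler in ea, eb.
    transitivity ((s * Derive a s) * tau s + (s * Derive b s) * K s); [ring |].
    rewrite ea, eb. ring. }
  replace 0 with ((Derive (fun u => a u * tau u + b u * K u) s * (K s ^ 2 + tau s ^ 2) -
     (a s * tau s + b s * K s) * (K s * Derive K s + tau s * Derive tau s)) /
    ((K s ^ 2 + tau s ^ 2) * sqrt (K s ^ 2 + tau s ^ 2))); [exact Hd |].
  rewrite Derive_plus, !Derive_mult by solve_ex_derive.
  replace (_ * (K s ^ 2 + tau s ^ 2) - _)
    with ((Derive a s * tau s + Derive b s * K s) * (K s ^ 2 + tau s ^ 2)
          + (K s * a s - tau s * b s) * (K s * Derive tau s - tau s * Derive K s)) by ring.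
  rewrite Hab', Hab. unfold Rdiv. ring.
Qed.

Lemma slant_ode_hypot_const : exists Q, Q <> 0 /\
  forall s, I s -> a s * tau s + b s * K s = Q * sqrt (K s ^ 2 + tau s ^ 2).
Proof.
  destruct I_interval as [_ [Hconv [_ [s1 Hs1]]]].
  set (q := fun u => (a u * tau u + b u * K u) / sqrt (K u ^ 2 + tau u ^ 2)).
  exists (q s1). split.
  - intro Hq0. destruct (K_reg s1 Hs1) as [Kpos _].
    destruct (ode s1 Hs1) as [_ [_ [_ [_ [Hab Hn]]]]].
    pose proof slant_ode_c_sqr_lt_1 as Hc.
    assert (HW : 0 < K s1 ^ 2 + tau s1 ^ 2) by apply hypot2_pos, Kpos.
    assert (HsW : 0 < sqrt (K s1 ^ 2 + tau s1 ^ 2)) by (apply sqrt_lt_R0; exact HW).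
    assert (Hnum : a s1 * tau s1 + b s1 * K s1 = 0).
    { unfold q in Hq0. apply (Rmult_eq_reg_r (/ sqrt (K s1 ^ 2 + tau s1 ^ 2))).
      - rewrite Rmult_0_l. exact Hq0.
      - apply Rinv_neq_0_compat, Rgt_not_eq, HsW. }
    assert (Hlagrange : (a s1 ^ 2 + b s1 ^ 2) * (K s1 ^ 2 + tau s1 ^ 2) =
      (a s1 * tau s1 + b s1 * K s1) ^ 2 + (K s1 * a s1 - tau s1 * b s1) ^ 2) by ring.
    rewrite Hnum, Hab in Hlagrange. nra.
  - intros s Hs. destruct (K_reg s Hs) as [Kpos _].
    assert (HsW : 0 < sqrt (K s ^ 2 + tau s ^ 2)) by (apply sqrt_lt_R0, hypot2_pos, Kpos).
    rewrite <- (Derive_0_eq_on I q s s1 Hconv slant_ode_hypot_ratio_derive Hs Hs1).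
    unfold q. field. apply Rgt_not_eq, HsW.
Qed.

Lemma slant_ode_euler_relation s : I s ->
  b s * euler tau s - a s * euler K s = c * (K s ^ 2 + tau s ^ 2).
Proof.
  intros Hs. destruct (K_reg s Hs) as [_ [dK dtau]].
  destruct (ode s Hs) as [da [db [ea [eb _]]]].
  assert (D0 : euler (fun u => K u * a u - tau u * b u) s = 0).
  { apply (euler_const_on I _ 0 s (open_interval_pos_open I I_interval)); [| exact Hs].
    intros u Hu. destruct (ode u Hu) as [_ [_ [_ [_ [Hab _]]]]]. rewrite Hab. ring. }
  unfold euler in D0, ea, eb |- *.
  rewrite Derive_minus, !Derive_mult in D0 by solve_ex_derive.
  transitivity (- (s * (Derive K s * a s + K s * Derive a s
                       - (Derive tau s * b s + tau s * Derive b s)))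
                + K s * (s * Derive a s) - tau s * (s * Derive b s)); [ring |].
  rewrite D0, ea, eb. ring.
Qed.

Lemma slant_ode_sigma_log_const : exists C, forall s, I s -> sigma_log K tau s = C.
Proof.
  destruct slant_ode_hypot_const as [Q [HQ HQs]].
  exists (c / Q). intros s Hs.
  destruct (K_reg s Hs) as [Kpos [dK dtau]].
  destruct (ode s Hs) as [_ [_ [_ [_ [Hab _]]]]].
  pose proof (slant_ode_euler_relation s Hs) as Hrel.
  rewrite sigma_log_eq by assumption.
  specialize (HQs s Hs). set (W := K s ^ 2 + tau s ^ 2) in *.
  assert (HW : 0 < W) by apply hypot2_pos, Kpos.
  assert (HsW : 0 < sqrt W) by (apply sqrt_lt_R0; exact HW).
  assert (HaW : a s * W = tau s * Q * sqrt W).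
  { replace (a s * W) with (tau s * (a s * tau s) + K s * (K s * a s)) by (unfold W; ring).
    rewrite Hab. transitivity (tau s * (a s * tau s + b s * K s)); [ring |].
    rewrite HQs. ring. }
  assert (HbW : b s * W = K s * Q * sqrt W).
  { replace (b s * W) with (K s * (b s * K s) + tau s * (tau s * b s)) by (unfold W; ring).
    rewrite <- Hab. transitivity (K s * (a s * tau s + b s * K s)); [ring |].
    rewrite HQs. ring. }
  assert (E : Q * sqrt W * (K s * euler tau s - tau s * euler K s) = c * W * W).
  { transitivity (K s * Q * sqrt W * euler tau s - tau s * Q * sqrt W * euler K s); [ring |].
    rewrite <- HaW, <- HbW.
    transitivity (W * (b s * euler tau s - a s * euler K s)); [ring |].
    rewrite Hrel. ring. }
  replace (K s * euler tau s - tau s * euler K s) with (c * W * W / (Q * sqrt W))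
    by (rewrite <- E; field; split; [apply Rgt_not_eq, HsW | exact HQ]).
  transitivity (c * W / (Q * (sqrt W * sqrt W))).
  - field. repeat split; try exact HQ; apply Rgt_not_eq; assumption.
  - rewrite sqrt_sqrt by lra. field. split; try exact HQ; apply Rgt_not_eq, HW.
Qed.

End SlantOde.

Definition vadd (u v : vec3) : vec3 := mk3 (c1 u + c1 v) (c2 u + c2 v) (c3 u + c3 v).
Definition vscal (k : R) (u : vec3) : vec3 := mk3 (k * c1 u) (k * c2 u) (k * c3 u).
Definition lincomb3 (a : R) (u : vec3) (b : R) (v : vec3) (c : R) (w : vec3) : vec3 :=
  vadd (vadd (vscal a u) (vscal b v)) (vscal c w).
Definition dot (u v : vec3) : R := c1 u * c1 v + c2 u * c2 v + c3 u * c3 v.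
Definition cross (u v : vec3) : vec3 :=
  mk3 (c2 u * c3 v - c3 u * c2 v) (c3 u * c1 v - c1 u * c3 v) (c1 u * c2 v - c2 u * c1 v).

Tactic Notation "simpl_mk3" := cbn [c1 c2 c3 mk3 fst snd].
Tactic Notation "simpl_mk3" "in" "*" := cbn [c1 c2 c3 mk3 fst snd] in *.

Lemma vec3_ext u v : c1 u = c1 v -> c2 u = c2 v -> c3 u = c3 v -> u = v.
Proof. destruct u as [[u1 u2] u3], v as [[v1 v2] v3]. unfold c1, c2, c3. simpl. congruence. Qed.

Lemma dot_self_nonneg u : 0 <= dot u u.
Proof.
  unfold dot. pose proof (pow2_ge_0 (c1 u)); pose proof (pow2_ge_0 (c2 u));
    pose proof (pow2_ge_0 (c3 u)). nra.
Qed.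

Lemma dot_comm u v : dot u v = dot v u.
Proof. unfold dot. ring. Qed.

Lemma dot_lincomb3_l a u b v c w z :
  dot (lincomb3 a u b v c w) z = a * dot u z + b * dot v z + c * dot w z.
Proof. unfold dot, lincomb3, vadd, vscal. simpl_mk3. ring. Qed.

Section OrthonormalFrame.

Variables T N : vec3.
Hypotheses (T_unit : dot T T = 1) (N_unit : dot N N = 1) (TN_orth : dot T N = 0).

Lemma cross_unit : dot (cross T N) (cross T N) = 1.
Proof.
  transitivity (dot T T * dot N N - dot T N ^ 2); [unfold dot, cross; simpl_mk3; ring |].
  rewrite T_unit, N_unit, TN_orth. ring.
Qed.

Lemma dot_cross_l : dot T (cross T N) = 0.
Proof. unfold dot, cross. simpl_mk3. ring. Qed.

Lemma dot_cross_r : dot N (cross T N) = 0.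
Proof. unfold dot, cross. simpl_mk3. ring. Qed.

(* Coordinatewise, [|T x N|^2 w = (|N|^2 <T,w> - <T,N><N,w>) T
   + (|T|^2 <N,w> - <T,N><T,w>) N + <T x N, w> (T x N)] is a ring identity. *)
Lemma frame_expand w :
  w = lincomb3 (dot T w) T (dot N w) N (dot (cross T N) w) (cross T N).
Proof.
  assert (Gram : forall (p : vec3 -> R), p = c1 \/ p = c2 \/ p = c3 ->
    p w * (dot T T * dot N N - dot T N ^ 2) =
    (dot N N * dot T w - dot T N * dot N w) * p T + (dot T T * dot N w - dot T N * dot T w) * p N
    + dot (cross T N) w * p (cross T N)).
  { intros p [-> | [-> | ->]]; unfold dot, cross; simpl_mk3; ring. }
  rewrite T_unit, N_unit, TN_orth in Gram.
  apply vec3_ext; unfold lincomb3, vadd, vscal; simpl_mk3.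
  - pose proof (Gram c1 (or_introl eq_refl)) as G. lra.
  - pose proof (Gram c2 (or_intror (or_introl eq_refl))) as G. lra.
  - pose proof (Gram c3 (or_intror (or_intror eq_refl))) as G. lra.
Qed.

Ltac frame_dots :=
  rewrite ?(dot_comm N T), ?(dot_comm (cross T N) T), ?(dot_comm (cross T N) N),
    ?T_unit, ?N_unit, ?cross_unit, ?TN_orth, ?dot_cross_l, ?dot_cross_r.

Lemma dot_frame_comb a b c :
  dot (lincomb3 a T b N c (cross T N)) (lincomb3 a T b N c (cross T N)) = a ^ 2 + b ^ 2 + c ^ 2.
Proof.
  rewrite dot_lincomb3_l, !(dot_comm _ (lincomb3 _ _ _ _ _ _)), !dot_lincomb3_l.
  frame_dots. ring.
Qed.

Lemma dot_frame_comb_N a b c : dot N (lincomb3 a T b N c (cross T N)) = b.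
Proof. rewrite dot_comm, dot_lincomb3_l. frame_dots. ring. Qed.

Lemma cross_frenet k t :
  vadd (cross (vscal k N) N) (cross T (lincomb3 (- k) T 0 N t (cross T N))) = vscal (- t) N.
Proof.
  apply vec3_ext; unfold lincomb3, vadd, vscal, cross; simpl_mk3.
  - transitivity (t * (c1 T * dot T N - c1 N * dot T T)); [unfold dot; ring |].
    rewrite T_unit, TN_orth. ring.
  - transitivity (t * (c2 T * dot T N - c2 N * dot T T)); [unfold dot; ring |].
    rewrite T_unit, TN_orth. ring.
  - transitivity (t * (c3 T * dot T N - c3 N * dot T T)); [unfold dot; ring |].
    rewrite T_unit, TN_orth. ring.
Qed.

End OrthonormalFrame.

Definition veuler (F : R -> vec3) (s : R) : vec3 :=
  mk3 (euler (fun u => c1 (F u)) s) (euler (fun u => c2 (F u)) s) (euler (fun u => c3 (F u)) s).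

Definition vderivable (F : R -> vec3) (s : R) : Prop :=
  ex_derive (fun u => c1 (F u)) s /\ ex_derive (fun u => c2 (F u)) s /\
  ex_derive (fun u => c3 (F u)) s.

Definition vsmooth_on (I : R -> Prop) (F : R -> vec3) : Prop :=
  smooth_on I (fun u => c1 (F u)) /\ smooth_on I (fun u => c2 (F u)) /\
  smooth_on I (fun u => c3 (F u)).

Lemma vsmooth_on_vderivable I F s : vsmooth_on I F -> I s -> vderivable F s.
Proof. intros [H1 [H2 H3]] Hs. repeat split; eapply smooth_on_ex; eauto. Qed.

Lemma vsmooth_on_ext (I : R -> Prop) (F G : R -> vec3) : open I ->
  (forall s, I s -> F s = G s) -> vsmooth_on I G -> vsmooth_on I F.
Proof.
  intros HI HFG [G1 [G2 G3]]. split; [| split].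
  - exact (smooth_on_ext I HI _ _ (fun s Hs => f_equal c1 (HFG s Hs)) G1).
  - exact (smooth_on_ext I HI _ _ (fun s Hs => f_equal c2 (HFG s Hs)) G2).
  - exact (smooth_on_ext I HI _ _ (fun s Hs => f_equal c3 (HFG s Hs)) G3).
Qed.

Lemma vsmooth_on_veuler I F : open I -> vsmooth_on I F -> vsmooth_on I (veuler F).
Proof. intros HI [H1 [H2 H3]]. repeat split; apply smooth_on_euler; assumption. Qed.

Lemma smooth_on_dot I F G : open I -> vsmooth_on I F -> vsmooth_on I G ->
  smooth_on I (fun u => dot (F u) (G u)).
Proof. intros HI [F1 [F2 F3]] [G1 [G2 G3]]. unfold dot. solve_smooth. Qed.

Lemma vsmooth_on_cross I F G : open I -> vsmooth_on I F -> vsmooth_on I G ->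
  vsmooth_on I (fun u => cross (F u) (G u)).
Proof.
  intros HI [F1 [F2 F3]] [G1 [G2 G3]]. unfold cross. repeat split; simpl_mk3; solve_smooth.
Qed.

Lemma vsmooth_on_vscal I f F : open I -> smooth_on I f -> vsmooth_on I F ->
  vsmooth_on I (fun u => vscal (f u) (F u)).
Proof. intros HI Hf [F1 [F2 F3]]. unfold vscal. repeat split; simpl_mk3; solve_smooth. Qed.

Lemma euler_dot F G s : vderivable F s -> vderivable G s ->
  euler (fun u => dot (F u) (G u)) s = dot (veuler F s) (G s) + dot (F s) (veuler G s).
Proof.
  intros [F1 [F2 F3]] [G1 [G2 G3]]. unfold veuler, euler, dot. simpl_mk3.
  rewrite !Derive_plus, !Derive_mult by solve_ex_derive. ring.
Qed.

Lemma euler_dot_const F v s : vderivable F s ->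
  euler (fun u => dot (F u) v) s = dot (veuler F s) v.
Proof.
  intros HF. rewrite (euler_dot F (fun _ => v)); [| exact HF | repeat split; apply ex_derive_const].
  unfold veuler, euler, dot. simpl_mk3. rewrite !Derive_const. ring.
Qed.

Lemma veuler_cross F G s : vderivable F s -> vderivable G s ->
  veuler (fun u => cross (F u) (G u)) s =
  vadd (cross (veuler F s) (G s)) (cross (F s) (veuler G s)).
Proof.
  intros [F1 [F2 F3]] [G1 [G2 G3]]. unfold veuler, euler, cross, vadd. simpl_mk3.
  apply vec3_ext; simpl_mk3; rewrite !Derive_minus, !Derive_mult by solve_ex_derive; ring.
Qed.

Lemma veuler_lincomb3 a T c N b B s :
  ex_derive a s -> vderivable T s -> vderivable N s -> ex_derive b s -> vderivable B s ->
  veuler (fun u => lincomb3 (a u) (T u) c (N u) (b u) (B u)) s =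
  vadd (lincomb3 (euler a s) (T s) 0 (N s) (euler b s) (B s))
       (lincomb3 (a s) (veuler T s) c (veuler N s) (b s) (veuler B s)).
Proof.
  intros da [T1 [T2 T3]] [N1 [N2 N3]] db [B1 [B2 B3]].
  unfold veuler, euler, lincomb3, vadd, vscal. simpl_mk3.
  apply vec3_ext; simpl_mk3;
    rewrite !Derive_plus, !Derive_mult, !Derive_const by solve_ex_derive; ring.
Qed.

Lemma veuler_0_eq_on I F a b : open_interval_pos I ->
  (forall s, I s -> vderivable F s /\ veuler F s = mk3 0 0 0) -> I a -> I b -> F a = F b.
Proof.
  intros [Hpos [Hconv _]] HF Ha Hb.
  assert (D0 : forall f : R -> R, (forall s, I s -> ex_derive f s /\ euler f s = 0) -> f a = f b).
  { intros f Hf. apply (Derive_0_eq_on I f a b Hconv); [| exact Ha | exact Hb].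
    intros s Hs. destruct (Hf s Hs) as [df ef].
    replace 0 with (Derive f s); [apply Derive_correct, df |].
    unfold euler in ef. apply Rmult_integral in ef as [Hs0 | ?]; [| assumption].
    specialize (Hpos s Hs). lra. }
  apply vec3_ext; [apply (D0 (fun u => c1 (F u))) | apply (D0 (fun u => c2 (F u)))
                  | apply (D0 (fun u => c3 (F u)))];
    intros s Hs; destruct (HF s Hs) as [[d1 [d2 d3]] E];
    unfold veuler in E; injection E; intros; split; assumption.
Qed.

Lemma veuler_ext F G s : (forall u, F u = G u) -> veuler F s = veuler G s.
Proof.
  intros HFG. unfold veuler, euler.
  rewrite (Derive_ext (fun u => c1 (F u)) (fun u => c1 (G u))),
          (Derive_ext (fun u => c2 (F u)) (fun u => c2 (G u))),
          (Derive_ext (fun u => c3 (F u)) (fun u => c3 (G u))) by (intro; rewrite HFG; reflexivity).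
  reflexivity.
Qed.

Lemma dot_vscal_l k u v : dot (vscal k u) v = k * dot u v.
Proof. unfold dot, vscal. simpl_mk3. ring. Qed.

(** * Logarithmic coordinates *)

Definition vlog (u : vec3) : vec3 := mk3 (ln (c1 u)) (ln (c2 u)) (ln (c3 u)).
Definition vexp (u : vec3) : vec3 := mk3 (exp (c1 u)) (exp (c2 u)) (exp (c3 u)).

Lemma vlog_vexp u : vlog (vexp u) = u.
Proof. apply vec3_ext; unfold vlog, vexp; simpl_mk3; apply ln_exp. Qed.

Lemma vpos_vexp u : vpos (vexp u).
Proof. unfold vpos, vexp. simpl_mk3. repeat split; apply exp_pos. Qed.

Lemma minner_eq u v : minner u v = exp (dot (vlog u) (vlog v)).
Proof. reflexivity. Qed.

Lemma mnorm_eq_e u : mnorm u = exp 1 <-> dot (vlog u) (vlog u) = 1.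
Proof.
  unfold mnorm. fold (dot (vlog u) (vlog u)).
  replace (dot (vlog u) (vlog u)) with (ln (c1 u) ^ 2 + ln (c2 u) ^ 2 + ln (c3 u) ^ 2)
    by (unfold dot, vlog; simpl_mk3; ring).
  set (y := ln (c1 u) ^ 2 + ln (c2 u) ^ 2 + ln (c3 u) ^ 2).
  assert (Hy : 0 <= y) by (unfold y; pose proof (pow2_ge_0 (ln (c1 u)));
    pose proof (pow2_ge_0 (ln (c2 u))); pose proof (pow2_ge_0 (ln (c3 u))); lra).
  split.
  - intros E. apply exp_inv in E. rewrite <- (sqrt_sqrt y), E by exact Hy. ring.
  - intros E. rewrite E, sqrt_1. reflexivity.
Qed.

Lemma vlog_mcross u v : vlog (mcross u v) = cross (vlog u) (vlog v).
Proof. apply vec3_ext; unfold vlog, mcross, cross; simpl_mk3; apply ln_exp. Qed.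

Lemma vlog_mvdiv u k : vlog (mvdiv u k) = vscal (/ ln k) (vlog u).
Proof.
  apply vec3_ext; unfold vlog, mvdiv, mdivs, vscal; simpl_mk3; rewrite ln_exp; apply Rmult_comm.
Qed.

Lemma vlog_vmder_eq F s : vlog (vmder F s) =
  mk3 (euler (fun u => c1 (F u)) s / c1 (F s)) (euler (fun u => c2 (F u)) s / c2 (F s))
      (euler (fun u => c3 (F u)) s / c3 (F s)).
Proof. apply vec3_ext; unfold vlog, vmder, mder; simpl_mk3; apply ln_exp. Qed.

Lemma ln_mder_exp (f : R -> R) s : ex_derive f s -> ln (mder (fun u => exp (f u)) s) = euler f s.
Proof.
  intros Hf. unfold mder, euler. rewrite ln_exp, Derive_comp.
  - rewrite (is_derive_unique exp (f s) (exp (f s))) by apply is_derive_exp.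
    field. apply Rgt_not_eq, exp_pos.
  - eexists. apply is_derive_exp.
  - exact Hf.
Qed.

Lemma ln_mder (g : R -> R) s : (forall u, 0 < g u) -> ex_derive (fun u => ln (g u)) s ->
  ln (mder g s) = euler (fun u => ln (g u)) s.
Proof.
  intros Hpos Hg. rewrite <- ln_mder_exp by exact Hg.
  unfold mder.
  rewrite (Derive_ext g (fun u => exp (ln (g u)))), exp_ln by (intros; rewrite ?exp_ln; auto).
  reflexivity.
Qed.

Lemma vlog_vmder F s : (forall u, vpos (F u)) -> vderivable (fun u => vlog (F u)) s ->
  vlog (vmder F s) = veuler (fun u => vlog (F u)) s.
Proof.
  intros Hpos [d1 [d2 d3]]. unfold vlog in *. simpl_mk3 in *.
  apply vec3_ext; unfold vlog, vmder, veuler; simpl_mk3; apply ln_mder; auto; intro u;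
    apply Hpos.
Qed.

Lemma vpos_vmder F s : vpos (vmder F s).
Proof. unfold vpos, vmder, mder. simpl_mk3. repeat split; apply exp_pos. Qed.

Lemma vpos_mvdiv u k : vpos (mvdiv u k).
Proof. unfold vpos, mvdiv, mdivs. simpl_mk3. repeat split; apply exp_pos. Qed.

(** * Frenet equations in logarithmic coordinates *)

Definition ltan (x : R -> vec3) (s : R) : vec3 := vlog (mtan x s).
Definition lnormal (x : R -> vec3) (s : R) : vec3 := vlog (mnormal x s).
Definition lbinormal (x : R -> vec3) (s : R) : vec3 := vlog (mbinormal x s).
Definition lcurv (x : R -> vec3) (s : R) : R := ln (mcurv x s).
Definition ltors (x : R -> vec3) (s : R) : R := ln (mtors x s).

Section Frenet.

Variables (I : R -> Prop) (x : R -> vec3).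
Hypotheses (I_interval : open_interval_pos I) (x_smooth : smooth_curve_on I x)
  (x_natural : mnatural I x) (x_curv : forall s, I s -> 1 < mcurv x s).

Let I_open : open I := open_interval_pos_open I I_interval.

Lemma curve_vsmooth : vsmooth_on I x.
Proof.
  repeat split; intros n k s _ Hs; destruct (x_smooth s Hs) as [_ Hd];
    destruct (Hd (S k)) as [d1 [d2 d3]]; assumption.
Qed.

Lemma ltan_smooth : vsmooth_on I (ltan x).
Proof.
  assert (Hlog : forall f, smooth_on I f -> (forall s, I s -> 0 < f s) ->
                 smooth_on I (fun s => euler f s / f s)).
  { intros f Hf Hpos.
    apply smooth_on_mult; [exact I_open | exact (smooth_on_euler I f I_open Hf) |].
    apply smooth_on_inv; auto. intros s Hs. apply Rgt_not_eq, Hpos, Hs. }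
  destruct curve_vsmooth as [X1 [X2 X3]].
  apply (vsmooth_on_ext _ _ _ I_open (fun s _ => vlog_vmder_eq x s)).
  repeat split; simpl_mk3; apply Hlog; auto; intros s Hs; apply (x_smooth s Hs).
Qed.

Lemma ltan_unit s : I s -> dot (ltan x s) (ltan x s) = 1.
Proof. intros Hs. apply mnorm_eq_e, x_natural, Hs. Qed.

Lemma vlog_vmder_tan s : I s -> vlog (vmder (mtan x) s) = veuler (ltan x) s.
Proof.
  intros Hs. apply vlog_vmder; [intro; apply vpos_vmder |].
  exact (vsmooth_on_vderivable _ _ _ ltan_smooth Hs).
Qed.

Lemma lcurv_pos s : I s -> 0 < lcurv x s.
Proof. intros Hs. unfold lcurv. rewrite <- ln_1. apply ln_increasing; [lra | apply x_curv, Hs]. Qed.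

Lemma lcurv_eq s : I s -> lcurv x s = sqrt (dot (veuler (ltan x) s) (veuler (ltan x) s)).
Proof.
  intros Hs. unfold lcurv, mcurv, mnorm. rewrite ln_exp, <- vlog_vmder_tan by exact Hs.
  unfold mtan, dot, vlog. simpl_mk3. f_equal. ring.
Qed.

Lemma lcurv_smooth : smooth_on I (lcurv x).
Proof.
  apply (smooth_on_ext _ I_open _ _ lcurv_eq).
  apply smooth_on_sqrt; [exact I_open | |].
  - intros s Hs. pose proof (lcurv_pos s Hs) as HK. rewrite lcurv_eq in HK by exact Hs.
    destruct (Rlt_or_le 0 (dot (veuler (ltan x) s) (veuler (ltan x) s))) as [Hp | Hn];
      [exact Hp | rewrite sqrt_neg_0 in HK; lra].
  - apply smooth_on_dot; auto using vsmooth_on_veuler, ltan_smooth.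
Qed.

Lemma lnormal_eq s : I s -> lnormal x s = vscal (/ lcurv x s) (veuler (ltan x) s).
Proof. intros Hs. unfold lnormal, mnormal. rewrite vlog_mvdiv, <- vlog_vmder_tan; auto. Qed.

Lemma frenet_tangent s : I s -> veuler (ltan x) s = vscal (lcurv x s) (lnormal x s).
Proof.
  intros Hs. pose proof (lcurv_pos s Hs) as HK. rewrite lnormal_eq by exact Hs.
  apply vec3_ext; unfold vscal; simpl_mk3; field; apply Rgt_not_eq, HK.
Qed.

Lemma lnormal_smooth : vsmooth_on I (lnormal x).
Proof.
  apply (vsmooth_on_ext _ _ _ I_open lnormal_eq), vsmooth_on_vscal; [exact I_open | |].
  - apply smooth_on_inv; [exact I_open | | exact lcurv_smooth].
    intros s Hs. apply Rgt_not_eq, lcurv_pos, Hs.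
  - apply vsmooth_on_veuler; [exact I_open | exact ltan_smooth].
Qed.

Lemma lnormal_unit s : I s -> dot (lnormal x s) (lnormal x s) = 1.
Proof.
  intros Hs. pose proof (lcurv_pos s Hs) as HK. pose proof (lcurv_eq s Hs) as E.
  rewrite lnormal_eq, dot_vscal_l, dot_comm, dot_vscal_l by exact Hs.
  set (A2 := dot (veuler (ltan x) s) (veuler (ltan x) s)) in *.
  assert (HA2 : A2 = lcurv x s ^ 2).
  { rewrite E, <- Rsqr_pow2, Rsqr_sqrt; [reflexivity | apply dot_self_nonneg]. }
  rewrite HA2. field. apply Rgt_not_eq, HK.
Qed.

Lemma ltan_lnormal_orth s : I s -> dot (ltan x s) (lnormal x s) = 0.
Proof.
  intros Hs. pose proof (lcurv_pos s Hs) as HK.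
  pose proof (vsmooth_on_vderivable _ _ _ ltan_smooth Hs) as dT.
  pose proof (euler_dot (ltan x) (ltan x) s dT dT) as E.
  rewrite (euler_const_on I _ 1 s I_open ltan_unit Hs), frenet_tangent in E by exact Hs.
  rewrite dot_vscal_l, (dot_comm (ltan x s)), dot_vscal_l, (dot_comm (lnormal x s)) in E.
  nra.
Qed.

Lemma lbinormal_eq s : lbinormal x s = cross (ltan x s) (lnormal x s).
Proof. apply vlog_mcross. Qed.

Lemma lbinormal_smooth : vsmooth_on I (lbinormal x).
Proof.
  apply (vsmooth_on_ext _ _ _ I_open (fun s _ => lbinormal_eq s)), vsmooth_on_cross;
    auto using ltan_smooth, lnormal_smooth.
Qed.

Lemma ltors_eq s : I s -> ltors x s = dot (veuler (lnormal x) s) (lbinormal x s).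
Proof.
  intros Hs. unfold ltors, mtors. rewrite minner_eq, ln_exp, vlog_vmder; [reflexivity | |].
  - intro u. apply vpos_mvdiv.
  - exact (vsmooth_on_vderivable _ _ _ lnormal_smooth Hs).
Qed.

Lemma ltors_smooth : smooth_on I (ltors x).
Proof.
  apply (smooth_on_ext _ I_open _ _ ltors_eq), smooth_on_dot;
    auto using vsmooth_on_veuler, lnormal_smooth, lbinormal_smooth.
Qed.

Lemma frame_vderivable s : I s ->
  vderivable (ltan x) s /\ vderivable (lnormal x) s /\ vderivable (lbinormal x) s.
Proof.
  intros Hs. split; [| split]; apply (vsmooth_on_vderivable I);
    auto using ltan_smooth, lnormal_smooth, lbinormal_smooth.
Qed.

Lemma frenet_normal s : I s ->
  veuler (lnormal x) s =
  lincomb3 (- lcurv x s) (ltan x s) 0 (lnormal x s) (ltors x s) (lbinormal x s).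
Proof.
  intros Hs. destruct (frame_vderivable s Hs) as [dT [dN _]].
  set (w := veuler (lnormal x) s).
  assert (HTw : dot (ltan x s) w = - lcurv x s).
  { pose proof (euler_dot (ltan x) (lnormal x) s dT dN) as E.
    rewrite (euler_const_on I _ 0 s I_open ltan_lnormal_orth Hs), frenet_tangent,
      dot_vscal_l, lnormal_unit in E by exact Hs.
    fold w in E. lra. }
  assert (HNw : dot (lnormal x s) w = 0).
  { pose proof (euler_dot (lnormal x) (lnormal x) s dN dN) as E.
    rewrite (euler_const_on I _ 1 s I_open lnormal_unit Hs), dot_comm in E.
    fold w in E. lra. }
  assert (HBw : dot (lbinormal x s) w = ltors x s) by (rewrite ltors_eq, dot_comm; auto).
  rewrite (frame_expand (ltan x s) (lnormal x s) (ltan_unit s Hs) (lnormal_unit s Hs)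
             (ltan_lnormal_orth s Hs) w) at 1.
  rewrite <- lbinormal_eq, HTw, HNw, HBw. reflexivity.
Qed.

Lemma frenet_binormal s : I s -> veuler (lbinormal x) s = vscal (- ltors x s) (lnormal x s).
Proof.
  intros Hs.
  destruct (frame_vderivable s Hs) as [dT [dN _]].
  rewrite (veuler_ext _ (fun u => cross (ltan x u) (lnormal x u)) s lbinormal_eq),
    veuler_cross, frenet_tangent, frenet_normal, lbinormal_eq by assumption.
  apply cross_frenet; [apply ltan_unit | apply ltan_lnormal_orth]; exact Hs.
Qed.

Lemma slant_helix_slant_ode :
  mslant_helix I x -> exists a b c, slant_ode I (lcurv x) (ltors x) a b c.
Proof.
  intros [v [_ [Hv [c0 Hc0]]]].
  set (w := vlog v). apply mnorm_eq_e in Hv. fold w in Hv.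
  assert (HN : forall u, I u -> dot (lnormal x u) w = ln c0).
  { intros u Hu. rewrite <- (Hc0 u Hu), minner_eq, ln_exp. reflexivity. }
  exists (fun u => dot (ltan x u) w), (fun u => dot (lbinormal x u) w), (ln c0).
  intros s Hs. destruct (frame_vderivable s Hs) as [dT [dN dB]].
  pose proof (euler_const_on I _ _ s I_open HN Hs) as DN.
  rewrite euler_dot_const, frenet_normal, dot_lincomb3_l in DN by assumption.
  pose proof (ltan_unit s Hs) as Tu. pose proof (lnormal_unit s Hs) as Nu.
  pose proof (ltan_lnormal_orth s Hs) as TN.
  rewrite (frame_expand _ _ Tu Nu TN w), (dot_frame_comb _ _ Tu Nu TN), <- lbinormal_eq, HN in Hv
    by exact Hs.
  repeat split.
  - destruct dT as [T1 [T2 T3]]. unfold dot. solve_ex_derive.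
  - destruct dB as [B1 [B2 B3]]. unfold dot. solve_ex_derive.
  - rewrite euler_dot_const, frenet_tangent, dot_vscal_l, HN; auto.
  - rewrite euler_dot_const, frenet_binormal, dot_vscal_l, HN; auto.
  - lra.
  - lra.
Qed.

Lemma slant_ode_axis_stationary a b c u : slant_ode I (lcurv x) (ltors x) a b c -> I u ->
  let V := fun u => lincomb3 (a u) (ltan x u) c (lnormal x u) (b u) (lbinormal x u) in
  vderivable V u /\ veuler V u = mk3 0 0 0.
Proof.
  intros ode Hu. cbv zeta. destruct (ode u Hu) as [da [db [ea [eb [Hab _]]]]].
  destruct (frame_vderivable u Hu) as [dT [dN dB]]. split.
  - destruct dT as [T1 [T2 T3]], dN as [N1 [N2 N3]], dB as [B1 [B2 B3]].
    unfold lincomb3, vadd, vscal. repeat split; simpl_mk3; solve_ex_derive.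
  - rewrite veuler_lincomb3, frenet_tangent, frenet_normal, frenet_binormal, ea, eb
      by assumption.
    apply vec3_ext; unfold lincomb3, vadd, vscal; simpl_mk3.
    + transitivity ((lcurv x u * a u - ltors x u * b u) * c1 (lnormal x u)); [ring |].
      rewrite Hab. ring.
    + transitivity ((lcurv x u * a u - ltors x u * b u) * c2 (lnormal x u)); [ring |].
      rewrite Hab. ring.
    + transitivity ((lcurv x u * a u - ltors x u * b u) * c3 (lnormal x u)); [ring |].
      rewrite Hab. ring.
Qed.

Lemma slant_ode_slant_helix :
  (exists a b c, slant_ode I (lcurv x) (ltors x) a b c) -> mslant_helix I x.
Proof.
  intros [a [b [c ode]]].
  pose proof I_interval as [_ [_ [_ [s1 Hs1]]]].
  set (V := fun u => lincomb3 (a u) (ltan x u) c (lnormal x u) (b u) (lbinormal x u)).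
  assert (HV : forall s, I s -> V s = V s1).
  { intros s Hs. apply (veuler_0_eq_on I V s s1 I_interval); [| exact Hs | exact Hs1].
    intros u Hu. exact (slant_ode_axis_stationary a b c u ode Hu). }
  pose proof (ltan_unit s1 Hs1) as Tu. pose proof (lnormal_unit s1 Hs1) as Nu.
  pose proof (ltan_lnormal_orth s1 Hs1) as TN.
  exists (vexp (V s1)). split; [apply vpos_vexp | split].
  - apply mnorm_eq_e. rewrite vlog_vexp. unfold V.
    rewrite lbinormal_eq, dot_frame_comb by assumption.
    destruct (ode s1 Hs1) as [_ [_ [_ [_ [_ Hn]]]]]. lra.
  - exists (exp c). intros s Hs. rewrite minner_eq, vlog_vexp, <- (HV s Hs).
    change (vlog (mnormal x s)) with (lnormal x s). unfold V.
    rewrite lbinormal_eq, dot_frame_comb_N; auto using ltan_unit, lnormal_unit, ltan_lnormal_orth.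
Qed.

Lemma mslant_helix_iff_slant_ode :
  mslant_helix I x <-> exists a b c, slant_ode I (lcurv x) (ltors x) a b c.
Proof. split; [apply slant_helix_slant_ode | apply slant_ode_slant_helix]. Qed.

Lemma lcurv_ltors_reg s : I s ->
  0 < lcurv x s /\ ex_derive (lcurv x) s /\ ex_derive (ltors x) s.
Proof.
  intros Hs. split; [| split].
  - exact (lcurv_pos s Hs).
  - exact (smooth_on_ex _ _ _ lcurv_smooth Hs).
  - exact (smooth_on_ex _ _ _ ltors_smooth Hs).
Qed.

Lemma ln_msigma s : I s -> ln (msigma x s) = sigma_log (lcurv x) (ltors x) s.
Proof.
  intros Hs. destruct (lcurv_ltors_reg s Hs) as [HK [dK dtau]].
  unfold msigma, mmul, mdivs, msq, mpowR, madd. rewrite !ln_exp, <- exp_plus, ln_exp.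
  rewrite ln_mder_exp; [reflexivity |].
  apply (ex_derive_div (ltors x) (lcurv x)); auto. apply Rgt_not_eq, HK.
Qed.

End Frenet.

Lemma msigma_pos x s : 0 < msigma x s.
Proof. apply exp_pos. Qed.

Theorem theorem4p14 (I : R -> Prop) (x : R -> vec3) :
  open_interval_pos I ->
  smooth_curve_on I x ->
  mnatural I x ->
  (forall s, I s -> 1 < mcurv x s) ->
  (mslant_helix I x <->
   exists c : R, forall s, I s -> msigma x s = c).
Proof.
  intros HI Hx Hnat Hk.
  pose proof (lcurv_ltors_reg I x HI Hx Hk) as Hreg.
  rewrite (mslant_helix_iff_slant_ode I x HI Hx Hnat Hk). split.
  - intros [a [b [c ode]]].
    destruct (slant_ode_sigma_log_const I _ _ a b c HI Hreg ode) as [C HC].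
    exists (exp C). intros s Hs.
    rewrite <- (HC s Hs), <- (ln_msigma I x HI Hx Hk s Hs), exp_ln by apply msigma_pos.
    reflexivity.
  - intros [c0 Hc0]. apply (sigma_log_const_slant_ode I _ _ (ln c0) Hreg).
    intros s Hs. rewrite <- (ln_msigma I x HI Hx Hk s Hs), Hc0 by exact Hs. reflexivity.
Qed.
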